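(* For every sesquiad $A$, the topological space $\operatorname{spec}_cA$ is compact (every open cover has a finite subcover).
   Context: Rings are commutative with $1$; monoids are commutative with $1$ and a zero $0$. A sesquiad is a monoid $A$ with an addition: partially defined sums $\sum_jk_ja_j$ ($k\in\mathbb Z^n$, $n\ge2$) coming from an injective monoid morphism $\varphi:A\to R$ into a ring with $\varphi(0)=0$, a sum being defined exactly when $\sum_jk_j\varphi(a_j)\in\varphi(A)$ and then equal to its preimage; sesquiad morphisms are monoid morphisms preserving defined sums. A congruence on $A$ is an equivalence relation $\mathcal C$ on $A$ such that $A/\mathcal C$ admits an addition making $A\to A/\mathcal C$ a sesquiad morphism. A congruence is prime if $A/\mathcal C$ is integral: $1\not\sim0$ and $af\sim bf$ implies $a\sim b$ or $f\sim 0$. $\operatorname{spec}_cA$ is the set of prime congruences on $A$ with the topology generated by the sets $D(a,b)=\{\mathcal C\in\operatorname{spec}_cA:(a,b)\notin\mathcal C\}$, $a,b\in A$. *)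

From HB Require Import structures.
From mathcomp Require Import all_boot all_order all_algebra.
From Stdlib Require Lists.List.
Set Implicit Arguments. Unset Strict Implicit. Unset Printing Implicit Defensive.
Import GRing.Theory.
Local Open Scope ring_scope.

(* A sesquiad is given by a commutative monoid with zero (car, smul, sone,
   szero) together with an injective monoid morphism [emb] into a commutative
   ring (zero ring allowed: comPzRingType) sending 0 to 0.  The addition of
   the sesquiad is the induced partial sum structure [sdefined] below; all
   notions used here (congruences, spec_c) depend only on it. *)
Record sesquiad := Sesquiad {
  scar :> Type;
  smul : scar -> scar -> scar;
  sone : scar;
  szero : scar;
  smulC : forall a b, smul a b = smul b a;
  smulA : forall a b c, smul a (smul b c) = smul (smul a b) c;
  smul1 : forall a, smul sone a = a;
  smul0 : forall a, smul szero a = szero;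
  sring : comPzRingType;
  emb : scar -> sring;
  emb_inj : forall a b, emb a = emb b -> a = b;
  emb_mul : forall a b, emb (smul a b) = emb a * emb b;
  emb_one : emb sone = 1;
  emb_zero : emb szero = 0 }.

Definition sdefined (A : sesquiad) (n : nat) (k : 'I_n -> int) (a : 'I_n -> A)
  (c : A) : Prop :=
  (2 <= n)%N /\ \sum_(j < n) (emb (a j)) *~ (k j) = emb c.

(* Congruence: an equivalence relation C such that A/C carries a sesquiad
   structure making A -> A/C a sesquiad morphism.  Equivalently (unfolding
   the definition of a sesquiad on A/C): there is a map psi from A to a
   commutative ring, whose kernel relation is exactly C (so psi induces an
   injection of A/C), which is multiplicative, sends 1 to 1 and 0 to 0, and
   such that every defined sum in A is mapped to the corresponding sum,
   i.e. the sum  \sum k_j [a_j]  is defined in A/C with value [c]. *)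
Definition congruence (A : sesquiad) (C : A -> A -> Prop) : Prop :=
  (forall a, C a a) /\ (forall a b, C a b -> C b a) /\
  (forall a b c, C a b -> C b c -> C a c) /\
  exists (S : comPzRingType) (psi : A -> S),
    (forall a b, C a b <-> psi a = psi b) /\
    (forall a b, psi (smul a b) = psi a * psi b) /\
    psi (sone A) = 1 /\ psi (szero A) = 0 /\
    (forall n (k : 'I_n -> int) (a : 'I_n -> A) (c : A),
        sdefined k a c -> \sum_(j < n) (psi (a j)) *~ (k j) = psi c).

(* Prime congruence: A/C is integral. *)
Definition prime_congruence (A : sesquiad) (C : A -> A -> Prop) : Prop :=
  congruence C /\ ~ C (sone A) (szero A) /\
  (forall a b f, C (smul a f) (smul b f) -> C a b \/ C f (szero A)).

Definition spec_c (A : sesquiad) : Type :=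
  { C : A -> A -> Prop | prime_congruence C }.

Definition Dab (A : sesquiad) (a b : A) : spec_c A -> Prop :=
  fun P => ~ (proj1_sig P) a b.

Inductive gen_open (X : Type) (B : (X -> Prop) -> Prop) : (X -> Prop) -> Prop :=
| go_sub U : B U -> gen_open B U
| go_full : gen_open B (fun _ => True)
| go_inter U V : gen_open B U -> gen_open B V ->
    gen_open B (fun x => U x /\ V x)
| go_union (I : Type) (F : I -> X -> Prop) :
    (forall i, gen_open B (F i)) -> gen_open B (fun x => exists i, F i x).

Definition spec_open (A : sesquiad) : (spec_c A -> Prop) -> Prop :=
  gen_open (fun U => exists a b : A, forall P, U P <-> Dab a b P).

Definition compact (X : Type) (opn : (X -> Prop) -> Prop) : Prop :=
  forall (I : Type) (U : I -> X -> Prop),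
    (forall i, opn (U i)) -> (forall x, exists i, U i x) ->
    exists s : list I, forall x, exists i, Stdlib.Lists.List.In i s /\ U i x.

(* An open cover of spec_c A without finite subcover makes the complements of
   its members generate a proper filter, contained in an ultrafilter F.  Choose
   for every prime congruence P a ring model psi_P : A -> S_P.  The reduced
   product of the S_P over F (families modulo those vanishing F-almost
   everywhere) models the congruence "P a b for F-almost all P", which is again
   prime because F is ultra.  Every basic open set D(a, b) containing this limit
   point belongs to F, hence so does every open set containing it; but the
   member of the cover containing the limit point is then in F together with its
   complement. *)

From HB Require Import structures.
From mathcomp Require Import all_boot all_algebra ring_quotient.
From mathcomp Require Import boolp classical_sets filter.
Set Implicit Arguments. Unset Strict Implicit. Unset Printing Implicit Defensive.
Import GRing.Theory.
Local Open Scope ring_scope.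
Local Open Scope classical_set_scope.
Local Open Scope quotient_scope.

Section DependentProduct.
Variables (X : Type) (S : X -> comPzRingType).

Definition dprod := forall x, S x.
HB.instance Definition _ := gen_eqMixin dprod.
HB.instance Definition _ := gen_choiceMixin dprod.

Definition dprod_add (v w : dprod) : dprod := fun x => v x + w x.
Definition dprod_opp (v : dprod) : dprod := fun x => - v x.
Definition dprod_mul (v w : dprod) : dprod := fun x => v x * w x.

Lemma dprod_ext (v w : dprod) : (forall x, v x = w x) -> v = w.
Proof. exact: functional_extensionality_dep. Qed.

Lemma dprod_addA : associative dprod_add.
Proof. by move=> u v w; apply: dprod_ext => x; apply: addrA. Qed.
Lemma dprod_addC : commutative dprod_add.
Proof. by move=> u v; apply: dprod_ext => x; apply: addrC. Qed.
Lemma dprod_add0 : left_id (fun x => 0) dprod_add.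
Proof. by move=> v; apply: dprod_ext => x; apply: add0r. Qed.
Lemma dprod_addN : left_inverse (fun x => 0) dprod_opp dprod_add.
Proof. by move=> v; apply: dprod_ext => x; apply: addNr. Qed.
HB.instance Definition _ :=
  GRing.isZmodule.Build dprod dprod_addA dprod_addC dprod_add0 dprod_addN.

Lemma dprod_mulA : associative dprod_mul.
Proof. by move=> u v w; apply: dprod_ext => x; apply: mulrA. Qed.
Lemma dprod_mulC : commutative dprod_mul.
Proof. by move=> u v; apply: dprod_ext => x; apply: mulrC. Qed.
Lemma dprod_mul1 : left_id (fun x => 1) dprod_mul.
Proof. by move=> v; apply: dprod_ext => x; apply: mul1r. Qed.
Lemma dprod_mulDl : left_distributive dprod_mul dprod_add.
Proof. by move=> u v w; apply: dprod_ext => x; apply: mulrDl. Qed.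
HB.instance Definition _ :=
  GRing.Zmodule_isComPzRing.Build dprod dprod_mulA dprod_mulC dprod_mul1 dprod_mulDl.

Definition dprod_eval (x : X) (v : dprod) : S x := v x.

Lemma dprod_eval_is_zmod_morphism x : zmod_morphism (dprod_eval x).
Proof. by []. Qed.
HB.instance Definition _ x :=
  GRing.isZmodMorphism.Build dprod (S x) (dprod_eval x) (dprod_eval_is_zmod_morphism x).

End DependentProduct.

Section ReducedProduct.
Variables (X : Type) (S : X -> comPzRingType) (F : set_system X).
Hypotheses (F_proper : ProperFilter F) (S_nonzero : forall x, (1 : S x) != 0).

Lemma dprod_oner_neq0 : (1 : dprod S) != 0.
Proof.
have [x _] := filter_ex (@filterT _ F _).
by apply/eqP => /(congr1 (dprod_eval x)) /eqP; rewrite (negPf (S_nonzero x)).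
Qed.

(* ring_quotient only quotients nontrivial rings. *)
Definition nz_dprod := dprod S.
HB.instance Definition _ := GRing.ComPzRing.on nz_dprod.
HB.instance Definition _ := GRing.PzSemiRing_isNonZero.Build nz_dprod dprod_oner_neq0.

Definition null_on_filter : {pred nz_dprod} := fun v => `[< F [set x | v x = 0] >].

Lemma null_on_filter_idealr : idealr_closed null_on_filter.
Proof.
split.
- by apply/asboolP; apply: filterE.
- apply/asboolP => F1; apply: (filter_not_empty F).
  by apply: filterS F1 => x /eqP; rewrite (negPf (S_nonzero x)).
- move=> a u v /asboolP Fu /asboolP Fv; apply/asboolP.
  apply: filterS2 Fu Fv => x /= u0 v0.
  by rewrite -[LHS]/(a x * u x + v x) u0 v0 mulr0 addr0.
Qed.
HB.instance Definition _ := isIdealr.Build nz_dprod null_on_filter null_on_filter_idealr.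

Definition reduced_prod := {ideal_quot null_on_filter}.

Lemma reduced_prod_eqE (v w : nz_dprod) :
  \pi_reduced_prod v = \pi w <-> F [set x | v x = w x].
Proof.
have -> : [set x | v x = w x] = [set x | (v - w) x = 0].
  apply/funext => x; rewrite /= -[(v - w) x]/(v x - w x) propeqE.
  by split => [->|/eqP]; rewrite ?subrr // subr_eq0 => /eqP.
by rewrite (rwP (eqquotP _ _ _)); split => /asboolP.
Qed.
End ReducedProduct.

Lemma compact_ultra (X : Type) (opn : set_system X) :
  (forall F : set_system X, UltraFilter F ->
     exists x, forall W, opn W -> W x -> F W) ->
  compact opn.
Proof.
move=> ultra_conv I U U_open U_cover; apply: contrapT => no_subcover.
pose avoids (s : list I) := [set x | forall i, List.In i s -> ~ U i x].
pose F0 := [set Y | exists s, avoids s `<=` Y].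
have F0_proper : ProperFilter F0.
  split; first move=> [s s_empty]; last split.
  - apply: no_subcover; exists s => x; apply: contrapT => x_uncovered.
    by apply: (s_empty x) => i i_s U_ix; apply: x_uncovered; exists i.
  - by exists nil.
  - move=> Y Z [s sY] [t tZ]; exists (s ++ t)%list => x x_st; split.
      by apply: sY => i i_s; apply: x_st; apply: List.in_or_app; left.
    by apply: tZ => i i_t; apply: x_st; apply: List.in_or_app; right.
  - by move=> Y Z YZ [s sY]; exists s => x /sY /YZ.
have [G [G_ultra F0G]] := ultraFilterLemma F0_proper.
have [x x_lim] := ultra_conv G G_ultra.
have [i U_ix] := U_cover x.
have GU : G (U i) := x_lim _ (U_open i) U_ix.
have GnU : G (~` U i) by apply: F0G; exists [:: i] => y /(_ i); apply; left.
by apply: (filter_not_empty G); rewrite -(setICr (U i)); apply: filterI.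
Qed.

Section RingModels.
Variable A : sesquiad.

Definition represents (C : A -> A -> Prop) (S : comPzRingType) (psi : A -> S) :=
  (forall a b, C a b <-> psi a = psi b) /\
  (forall a b, psi (smul a b) = psi a * psi b) /\
  psi (sone A) = 1 /\ psi (szero A) = 0 /\
  (forall n (k : 'I_n -> int) (a : 'I_n -> A) (c : A),
      sdefined k a c -> \sum_(j < n) (psi (a j)) *~ (k j) = psi c).

Lemma represents_congruence C (S : comPzRingType) (psi : A -> S) :
  represents C psi -> congruence C.
Proof.
move=> psiC; have [kerC _] := psiC.
split; first by move=> a; apply/kerC.
split; first by move=> a b /kerC/esym/kerC.
split; first by move=> a b c /kerC ab /kerC bc; apply/kerC; rewrite ab.
by exists S, psi.
Qed.

Lemma congruence_model C :
  congruence C -> exists m : {S : comPzRingType & A -> S}, represents C (projT2 m).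
Proof. by case=> _ [_ [_ [S [psi psiC]]]]; exists (existT _ S psi). Qed.

Lemma prime_model_nonzero C (S : comPzRingType) (psi : A -> S) :
  prime_congruence C -> represents C psi -> (1 : S) != 0.
Proof.
move=> [_ [C10 _]] [kerC [_ [psi1 [psi0 _]]]]; apply/eqP => S10.
by apply/C10/kerC; rewrite psi1 psi0.
Qed.

End RingModels.

Section UltraLimit.
Variables (A : sesquiad) (F : set_system (spec_c A)).
Hypothesis F_ultra : UltraFilter F.

Definition ultra_limit (a b : A) : Prop := F [set P | sval P a b].

Let model (P : spec_c A) : {S : comPzRingType & A -> S} :=
  sval (cid (congruence_model (proj1 (svalP P)))).
Let ring_of (P : spec_c A) : comPzRingType := projT1 (model P).
Let psi (P : spec_c A) : A -> ring_of P := projT2 (model P).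
Let psi_represents (P : spec_c A) : represents (sval P) (psi P).
Proof. by rewrite /psi /ring_of /model; case: cid. Qed.
Let ring_of_nonzero (P : spec_c A) : (1 : ring_of P) != 0 :=
  prime_model_nonzero (svalP P) (psi_represents P).

Let limit_ring := reduced_prod ultra_proper ring_of_nonzero.
Let limit_map (a : A) : limit_ring := \pi_limit_ring ((fun P => psi P a) : nz_dprod ring_of).

Lemma ultra_limit_represents : represents ultra_limit limit_map.
Proof.
split.
  move=> a b; rewrite reduced_prod_eqE /ultra_limit.
  suff -> : [set P | psi P a = psi P b] = [set P | sval P a b] by [].
  by rewrite predeqE => P; apply: iff_sym; apply: (psi_represents P).1.
split.
  move=> a b; rewrite -rmorphM; congr \pi; apply: dprod_ext => P.
  by apply: (psi_represents P).2.1.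
split.
  rewrite -(rmorph1 \pi_limit_ring); congr \pi; apply: dprod_ext => P.
  by apply: (psi_represents P).2.2.1.
split.
  rewrite -(raddf0 \pi_limit_ring); congr \pi; apply: dprod_ext => P.
  by apply: (psi_represents P).2.2.2.1.
move=> n k a c ac; under eq_bigr do rewrite -raddfMz.
rewrite -raddf_sum; congr \pi; apply: dprod_ext => P.
rewrite -[LHS]/(dprod_eval P _) raddf_sum.
under eq_bigr do rewrite raddfMz.
exact: (psi_represents P).2.2.2.2 _ _ _ _ ac.
Qed.

Lemma ultra_limit_prime : prime_congruence ultra_limit.
Proof.
split; first exact: represents_congruence ultra_limit_represents.
split.
  by move=> F10; apply: (filter_not_empty F); apply: filterS F10 => P /(svalP P).2.1.
move=> a b f Fabf.
have [Fab | Fnab] := in_ultra_setVsetC [set P | sval P a b] F_ultra; [by left | right].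
apply: filterS2 Fabf Fnab => P /= abf nab.
by case: ((svalP P).2.2 a b f abf).
Qed.

Definition ultra_limit_point : spec_c A := exist _ ultra_limit ultra_limit_prime.

Lemma ultra_limit_point_nbhs W : spec_open W -> W ultra_limit_point -> F W.
Proof.
elim=> [U [a [b UD]] | | U V _ IHU _ IHV [/IHU FU /IHV FV] | I U _ IHU [i /IHU FUi]].
- move=> /UD nab; have [//|Fnab] := in_ultra_setVsetC [set P | sval P a b] F_ultra.
  by apply: filterS Fnab => P /= ?; apply/UD.
- by move=> _; apply: filterT.
- exact: filterI.
- by apply: filterS FUi => P; exists i.
Qed.

End UltraLimit.

Theorem mainTheorem7 (A : sesquiad) : compact (@spec_open A).
Proof.
apply: compact_ultra => F F_ultra.
by exists (ultra_limit_point F_ultra); apply: ultra_limit_point_nbhs.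
Qed.
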